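(* Let $K$ be a real biquadratic field with $\operatorname{sgnrk}(K)\le 3$. Then $N_{K/\mathbb{Q}}(\eta)=1$ for every $\eta\in\mathcal{O}_K^\times$.
   Context: A real biquadratic field is $K=\mathbb{Q}(\sqrt{D_1},\sqrt{D_2})$ of degree $4$ with $D_1,D_2>1$ squarefree integers (so $K$ is totally real). For $\alpha\in K^\times$, $\operatorname{sgn}(\alpha)\in\mathbb{F}_2^4$ records the signs of its four real embeddings ($0$ for positive, $1$ for negative). $\operatorname{sgnrk}(K)$ is the $\mathbb{F}_2$-dimension of the unit signature group $\{\operatorname{sgn}(\eta):\eta\in\mathcal{O}_K^\times\}$. *)

(* Real biquadratic fields K = Q(sqrt D1, sqrt D2) are modelled
   concretely: an element of K is its coordinate vector (a,b,c,d) in the Q-basis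
   1, sqrt D1, sqrt D2, sqrt D1 * sqrt D2, and its four real embeddings are
   computed in the real closed field [realalg] of real algebraic numbers. *)
From HB Require Import structures.
From mathcomp Require Import all_boot all_order all_algebra.
From mathcomp Require Import boolp.
From mathcomp Require Import realalg.
Set Implicit Arguments. Unset Strict Implicit. Unset Printing Implicit Defensive.
Import Order.TTheory GRing.Theory Num.Theory.
Local Open Scope ring_scope.

Definition squarefree (n : nat) : Prop :=
  forall p : nat, prime p -> ~~ (p * p %| n)%N.

Definition bq := (rat * rat * rat * rat)%type.

Definition sgnb (s : bool) : realalg := if s then -1 else 1.

Definition emb (D1 D2 : nat) (s t : bool) (x : bq) : realalg :=
  let '(a, b, c, d) := x in
  ratr a + sgnb s * ratr b * Num.sqrt (D1%:R)
         + sgnb t * ratr c * Num.sqrt (D2%:R)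
         + sgnb s * sgnb t * ratr d * (Num.sqrt (D1%:R) * Num.sqrt (D2%:R)).

Definition val0 (D1 D2 : nat) (x : bq) : realalg := emb D1 D2 false false x.

Definition integralK (D1 D2 : nat) (x : bq) : Prop :=
  exists p : {poly int}, p \is monic /\
    root (map_poly (fun z : int => z%:~R : realalg) p) (val0 D1 D2 x).

Definition unitK (D1 D2 : nat) (x : bq) : Prop :=
  integralK D1 D2 x /\
  exists y : bq, integralK D1 D2 y /\ val0 D1 D2 x * val0 D1 D2 y = 1.

Definition embi (D1 D2 : nat) (i : 'I_4) (x : bq) : realalg :=
  emb D1 D2 (odd i) (2 <= i)%N x.

Definition normK (D1 D2 : nat) (x : bq) : realalg :=
  \prod_(i < 4) embi D1 D2 i x.

Definition sgnK (D1 D2 : nat) (x : bq) : 'rV['F_2]_4 :=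
  \row_(i < 4) (nat_of_bool (embi D1 D2 i x < 0)%R)%:R.

Definition unit_sgn_set (D1 D2 : nat) : {set 'rV['F_2]_4} :=
  [set v | `[< exists eta : bq, unitK D1 D2 eta /\ sgnK D1 D2 eta = v >]].

(* sgnrk(K) = F_2-dimension of the unit signature group (of its span, which equals it) *)
Definition sgnrk (D1 D2 : nat) : nat :=
  \dim (<< enum (unit_sgn_set D1 D2) >>%VS : {vspace 'rV['F_2]_4}).

From mathcomp Require Import all_boot all_order all_algebra.
From mathcomp Require Import algC algnum.
From mathcomp Require Import realalg.
From mathcomp Require Import boolp.
From mathcomp Require Import ring.
Import Order.TTheory GRing.Theory Num.Theory.
Local Open Scope ring_scope.

(* If N(eta) = -1, an odd number of the four real conjugates of eta are negative.
   The Galois conjugates of eta are units whose sign vectors are that of eta with the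
   embeddings permuted by the Klein four-group; together with the sign vector of -1
   they then span F_2^4, so sgnrk(K) = 4.  That N(eta) = +-1 holds because N(eta) and
   N(eta^-1) are rational algebraic integers with product 1.
   Galois conjugation is handled concretely: since D1, D2 and D1 D2 are not rational
   squares, 1, sqrt D1, sqrt D2, sqrt D1 sqrt D2 are linearly independent over Q, so an
   integral polynomial relation satisfied by the real number [val0 D1 D2 x] holds for
   every choice of square roots of D1 and D2. *)

Lemma rat_sqr_neq_odd_logn {p n : nat} :
  prime p -> odd (logn p n) -> forall q : rat, q ^+ 2 != n%:R.
Proof.
move=> p_pr odd_n q; apply/eqP => qn.
have n_gt0 : (0 < n)%N by move: odd_n; case: (n) => //; rewrite logn0.
have den_neq0 : (denq q)%:~R != 0 :> rat by rewrite intr_eq0 denq_eq0.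
have num_gt0 : (0 < `|numq q|)%N.
  rewrite absz_gt0 numq_eq0; apply: contra_eqN qn => /eqP->.
  by rewrite expr0n eq_sym pnatr_eq0 -lt0n.
have den_gt0 : (0 < `|denq q|)%N by rewrite absz_gt0 denq_eq0.
have numq_sqr : numq q ^+ 2 = n%:Z * denq q ^+ 2.
  apply: (@intr_inj rat); rewrite !expr2 !intrM -[in LHS](divq_num_den q) in qn *.
  rewrite (_ : (n%:Z)%:~R = n%:R :> rat) // -qn; field; exact: den_neq0.
have /(congr1 (logn p)) := congr1 absz numq_sqr.
rewrite abszM !abszX /= lognM ?expn_gt0 ?den_gt0 // !lognX => /(congr1 odd).
by rewrite oddD !oddM /= addbF -(negbK (odd _)) odd_n.
Qed.

Lemma logn_squarefree (p : nat) {D : nat} : (0 < D)%N -> squarefree D -> prime p ->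
  (logn p D <= 1)%N.
Proof.
move=> D_gt0 sqD p_pr; have := sqD p p_pr.
by rewrite mulnn (pfactor_dvdn 2 p_pr D_gt0) -ltnNge ltnS.
Qed.

Lemma squarefree_odd_logn {D : nat} : (1 < D)%N -> squarefree D ->
  exists2 p, prime p & odd (logn p D).
Proof.
move=> D_gt1 sqD; have D_gt0 := ltnW D_gt1; have p_pr := pdiv_prime D_gt1.
exists (pdiv D) => //; suff -> : logn (pdiv D) D = 1%N by [].
apply/eqP; rewrite eqn_leq logn_squarefree //=.
by rewrite -(pfactor_dvdn 1 p_pr D_gt0) expn1 pdiv_dvd.
Qed.

Lemma squarefree_mul_odd_logn {D1 D2 : nat} : (1 < D1)%N -> (1 < D2)%N ->
  squarefree D1 -> squarefree D2 -> D1 <> D2 ->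
  exists2 p, prime p & odd (logn p (D1 * D2)).
Proof.
move=> D1_gt1 D2_gt1 sqD1 sqD2 D12; have [D1_gt0 D2_gt0] := (ltnW D1_gt1, ltnW D2_gt1).
case: (pselect (exists2 p, prime p & odd (logn p (D1 * D2)))) => // no_odd.
case: D12; apply: eqn_from_log => // p; have [p_pr|/negbTE p_npr] := boolP (prime p).
  have := logn_squarefree p D1_gt0 sqD1 p_pr; have := logn_squarefree p D2_gt0 sqD2 p_pr.
  (* both valuations are at most 1 and their sum is even, so they agree *)
  have /negP : ~~ odd (logn p D1 + logn p D2).
    by apply/negP => odd_sum; apply: no_odd; exists p; rewrite ?lognM.
  by case: (logn p D1) => [|[|]]; case: (logn p D2) => [|[|]].
by rewrite /logn p_npr.
Qed.

Lemma squarefree_nsqr {D : nat} : (1 < D)%N -> squarefree D -> forall q : rat, q ^+ 2 != D%:R.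
Proof. by move=> D_gt1 /(squarefree_odd_logn D_gt1) [p p_pr /(rat_sqr_neq_odd_logn p_pr)]. Qed.

Section LinearIndependence.
Variable R : numFieldType.

Lemma ratr_quad_eq0 {s : R} {m : rat} : s ^+ 2 = ratr m -> (forall q : rat, q ^+ 2 != m) ->
  forall p q : rat, ratr p + ratr q * s = 0 -> p = 0 /\ q = 0.
Proof.
move=> sm m_nsqr p q pqs0; have [q0|q_neq0] := eqVneq q 0.
  by move: pqs0; rewrite q0 rmorph0 mul0r addr0 => /eqP; rewrite fmorph_eq0 => /eqP.
have qs : ratr q * s = - ratr p by apply/eqP; rewrite -addr_eq0 addrC pqs0.
have s_rat : s = ratr (- p / q).
  by rewrite rmorphM rmorphN fmorphV /= -qs; field; rewrite fmorph_eq0.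
by have /eqP[] := m_nsqr (- p / q); apply: (fmorph_inj (@ratr R)); rewrite rmorphXn /= -s_rat.
Qed.

Variables (s1 s2 : R) (d1 d2 : rat).
Hypotheses (s1_sqr : s1 ^+ 2 = ratr d1) (s2_sqr : s2 ^+ 2 = ratr d2).
Hypotheses (d1_nsqr : forall q : rat, q ^+ 2 != d1) (d2_nsqr : forall q : rat, q ^+ 2 != d2)
  (d12_nsqr : forall q : rat, q ^+ 2 != d1 * d2).

Let d1_neq0 : d1 != 0. Proof. by have := d1_nsqr 0; rewrite expr0n eq_sym. Qed.

Lemma ratr_lin3_eq0 a b c : ratr a + ratr b * s1 + ratr c * s2 = 0 ->
  [/\ a = 0, b = 0 & c = 0].
Proof.
move=> abc0.
(* squaring [ratr a + ratr b * s1 = - ratr c * s2] eliminates [s2] *)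
have : ratr (a ^+ 2 + b ^+ 2 * d1 - c ^+ 2 * d2) + ratr (a * b *+ 2) * s1 = 0.
  have -> : ratr (a ^+ 2 + b ^+ 2 * d1 - c ^+ 2 * d2) + ratr (a * b *+ 2) * s1
      = (ratr a + ratr b * s1) ^+ 2 - (ratr c * s2) ^+ 2 :> R.
    rewrite !(rmorphD, rmorphN, rmorphM, rmorphXn, rmorphMn) /= -s1_sqr -s2_sqr; ring.
  have -> : ratr a + ratr b * s1 = - (ratr c * s2) by apply/eqP; rewrite -addr_eq0 abc0.
  by rewrite sqrrN subrr.
case/(ratr_quad_eq0 s1_sqr d1_nsqr) => /eqP sum0 /eqP.
rewrite mulrn_eq0 /= mulf_eq0 => /orP[]/eqP ab0; move: sum0; rewrite ab0 expr0n /=.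
- rewrite add0r subr_eq0 => /eqP bc; have [c0|c_neq0] := eqVneq c 0.
    move: bc; rewrite c0 expr0n /= mul0r => /eqP.
    by rewrite mulf_eq0 (negPf d1_neq0) orbF expf_eq0 => /eqP.
  have /eqP[] := d12_nsqr (b * d1 / c).
  rewrite (_ : _ ^+ 2 = b ^+ 2 * d1 * d1 / c ^+ 2); last by field.
  by rewrite bc; field.
- rewrite mul0r addr0 subr_eq0 => /eqP ac; have [c0|c_neq0] := eqVneq c 0.
    by move: ac; rewrite c0 expr0n /= mul0r => /eqP; rewrite expf_eq0 => /eqP.
  by have /eqP[] := d2_nsqr (a / c); rewrite expr_div_n ac; field.
Qed.

Lemma ratr_biquad_eq0 a b c d :
  ratr a + ratr b * s1 + ratr c * s2 + ratr d * (s1 * s2) = 0 ->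
  [/\ a = 0, b = 0, c = 0 & d = 0].
Proof.
move=> abcd0.
(* multiplying by [ratr c - ratr d * s1] eliminates the [s1 * s2] term *)
have : ratr (a * c - b * d * d1) + ratr (b * c - a * d) * s1
       + ratr (c ^+ 2 - d ^+ 2 * d1) * s2 = 0.
  rewrite -(mulr0 (ratr c - ratr d * s1)) -abcd0.
  by rewrite !(rmorphD, rmorphN, rmorphM, rmorphXn) /= -s1_sqr; ring.
case/ratr_lin3_eq0 => _ _ /eqP; rewrite subr_eq0 => /eqP cd.
have [d0|d_neq0] := eqVneq d 0; last first.
  by have /eqP[] := d1_nsqr (c / d); rewrite expr_div_n cd; field.
move: cd abcd0; rewrite d0 expr0n /= mul0r => /eqP; rewrite expf_eq0 => /eqP c0.
by rewrite c0 !rmorph0 !mul0r !addr0 => /(ratr_quad_eq0 s1_sqr d1_nsqr) [].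
Qed.

End LinearIndependence.
Arguments ratr_biquad_eq0 {R s1 s2 d1 d2}.

Lemma prodr_lt0_odd (R : realDomainType) n (F : 'I_n -> R) : \prod_(i < n) F i != 0 ->
  (\prod_(i < n) F i < 0) = odd (\sum_(i < n) (F i < 0)%R)%N.
Proof.
elim: n F => [|n IHn] F; first by rewrite !big_ord0 ltr10.
rewrite !big_ord_recr mulf_eq0 negb_or /= oddD oddb => /andP[prod_neq0 last_neq0].
by rewrite mulr_lt0 prod_neq0 last_neq0 IHn.
Qed.

Definition F2_of_bool (b : bool) : 'F_2 := (b : nat)%:R.

Lemma dim_span_sign_patterns (S : {set 'rV['F_2]_4}) (neg : bool -> bool -> bool) :
  neg false false (+) neg true false (+) neg false true (+) neg true true ->
  (forall s t, \row_(i < 4) F2_of_bool (neg (odd i (+) s) ((2 <= i)%N (+) t)) \in S) ->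
  \row_(i < 4) 1 \in S ->
  \dim (<< enum S >>%VS : {vspace 'rV['F_2]_4}) = 4%N.
Proof.
move=> odd_neg signS oneS.
set V := (<< enum S >>%VS : {vspace 'rV['F_2]_4}).
have inV v : v \in S -> v \in V by move=> vS; apply: memv_span; rewrite mem_enum.
pose u s t := \row_(i < 4) F2_of_bool (neg (odd i (+) s) ((2 <= i)%N (+) t)).
pose one : 'rV['F_2]_4 := \row_(i < 4) 1.
pose e (j : 'I_4) : 'rV['F_2]_4 := delta_mx 0 j.
pose a := F2_of_bool (neg false false) + F2_of_bool (neg true false).
pose c := F2_of_bool (neg false false) + F2_of_bool (neg false true).
have uV s t : u s t \in V := inV _ (signS s t).
have oneV : one \in V := inV _ oneS.
(* by parity, [u false false + u true false = (a, a, a + 1, a + 1)], and similarly for [c] *)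
have [E23 E13 E3] : [/\ e 2 + e 3 = u false false + u true false + a *: one,
    e 1 + e 3 = u false false + u false true + c *: one
  & e 3 = u false false + F2_of_bool (neg false false) *: one
          + a *: (e 1 + e 3) + c *: (e 2 + e 3)].
  rewrite /a /c; split; apply/rowP => -[[|[|[|[|//]]]] ?]; rewrite !mxE /=; move: (odd_neg);
  by case: (neg false false) (neg true false) (neg false true) (neg true true)
    => [] [] [] [] //= _; apply/eqP.
have e23V : e 2 + e 3 \in V by rewrite E23 !(memvD, memvZ, uV, oneV).
have e13V : e 1 + e 3 \in V by rewrite E13 !(memvD, memvZ, uV, oneV).
have e3V : e 3 \in V by rewrite E3 !(e13V, e23V, memvD, memvZ, uV, oneV).
have e1V : e 1 \in V by rewrite -(addrK (e 3) (e 1)) memvB.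
have e2V : e 2 \in V by rewrite -(addrK (e 3) (e 2)) memvB.
have e0V : e 0 \in V.
  suff -> : e 0 = one - e 1 - e 2 - e 3 by rewrite !memvB.
  by apply/rowP => -[[|[|[|[|//]]]] ?]; rewrite !mxE /=; apply/eqP.
have fullV : (fullv <= V)%VS.
  apply/subvP => w _; rewrite (row_sum_delta w); apply: memv_suml => j _; apply: memvZ.
  by case: j => -[|[|[|[|//]]]] j_lt; [exact: e0V | exact: e1V | exact: e2V | exact: e3V].
have -> : V = fullv by apply/eqP; rewrite eqEsubv subvf fullV.
by rewrite dimvf.
Qed.

Definition bq_eval {R : numFieldType} (r1 r2 : R) (x : bq) : R :=
  let '(a, b, c, d) := x in ratr a + ratr b * r1 + ratr c * r2 + ratr d * (r1 * r2).

Definition bq_cst (q : rat) : bq := (q, 0, 0, 0).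

Definition bq_add (x y : bq) : bq :=
  let '(a, b, c, d) := x in let '(a', b', c', d') := y in
  (a + a', b + b', c + c', d + d').

Definition bq_mul (D1 D2 : nat) (x y : bq) : bq :=
  let '(a, b, c, d) := x in let '(a', b', c', d') := y in
  (a * a' + D1%:R * b * b' + D2%:R * c * c' + (D1 * D2)%:R * d * d',
   a * b' + b * a' + D2%:R * (c * d' + d * c'),
   a * c' + c * a' + D1%:R * (b * d' + d * b'),
   a * d' + d * a' + b * c' + c * b').

(* [x] times its conjugate under [sqrt D1 |-> - sqrt D1] is [A + 2 C sqrt D2]. *)
Definition bq_norm (D1 D2 : nat) (x : bq) : rat :=
  let '(a, b, c, d) := x in
  let A := a ^+ 2 + D2%:R * c ^+ 2 - D1%:R * b ^+ 2 - (D1 * D2)%:R * d ^+ 2 in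
  let C := a * c - D1%:R * b * d in
  A ^+ 2 - D2%:R * (C *+ 2) ^+ 2.

Definition bq_conj (s t : bool) (x : bq) : bq :=
  let '(a, b, c, d) := x in
  (a, (-1) ^+ s * b, (-1) ^+ t * c, (-1) ^+ s * (-1) ^+ t * d).

Lemma bq_evalC (R : numFieldType) (r1 r2 : R) q : bq_eval r1 r2 (bq_cst q) = ratr q.
Proof. by rewrite /= !rmorph0 !mul0r !addr0. Qed.

Lemma bq_evalD (R : numFieldType) (r1 r2 : R) x y :
  bq_eval r1 r2 (bq_add x y) = bq_eval r1 r2 x + bq_eval r1 r2 y.
Proof. by case: x y => [[[a b] c] d] [[[a' b'] c'] d'] /=; rewrite !rmorphD; ring. Qed.

Section SquareRoots.
Variables (R : numFieldType) (D1 D2 : nat) (r1 r2 : R).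
Hypotheses (r1_sqr : r1 ^+ 2 = D1%:R) (r2_sqr : r2 ^+ 2 = D2%:R).

Lemma bq_evalM x y : bq_eval r1 r2 (bq_mul D1 D2 x y) = bq_eval r1 r2 x * bq_eval r1 r2 y.
Proof.
case: x y => [[[a b] c] d] [[[a' b'] c'] d'] /=.
by rewrite !(rmorphD, rmorphM) /= !ratr_nat -r1_sqr -r2_sqr; ring.
Qed.

Lemma bq_norm_conjugates x :
  bq_eval r1 r2 x * bq_eval (- r1) r2 x * bq_eval r1 (- r2) x * bq_eval (- r1) (- r2) x
  = ratr (bq_norm D1 D2 x).
Proof.
case: x => [[[a b] c] d] /=.
by rewrite !(rmorphD, rmorphN, rmorphM, rmorphXn, rmorphMn, rmorph1) /= -r1_sqr -r2_sqr; ring.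
Qed.

End SquareRoots.
Arguments bq_evalM {R D1 D2 r1 r2}.
Arguments bq_norm_conjugates {R D1 D2 r1 r2}.

(* [y] is computed by Horner's rule with [bq_add] and [bq_mul], so it does not depend on
   the choice of square roots [r1], [r2]. *)
Lemma horner_bq_eval (D1 D2 : nat) (p : {poly int}) x : exists y : bq,
  forall (R : numFieldType) (r1 r2 : R), r1 ^+ 2 = D1%:R -> r2 ^+ 2 = D2%:R ->
  (map_poly (fun z : int => z%:~R : R) p).[bq_eval r1 r2 x] = bq_eval r1 r2 y.
Proof.
elim/poly_ind: p => [|p c [y Hy]].
  by exists (bq_cst 0) => R r1 r2 _ _; rewrite map_poly0 horner0 bq_evalC rmorph0.
exists (bq_add (bq_mul D1 D2 y x) (bq_cst c%:~R)) => R r1 r2 r1_sqr r2_sqr.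
have -> : (fun z : int => z%:~R : R) = intmul 1 by [].
rewrite rmorphD rmorphM /= map_polyX map_polyC hornerMXaddC.
by rewrite bq_evalD (bq_evalM r1_sqr r2_sqr) bq_evalC ratr_int Hy.
Qed.

Lemma bq_eval_conj (R : numFieldType) (r1 r2 : R) s t x :
  bq_eval r1 r2 (bq_conj s t x) = bq_eval ((-1) ^+ s * r1) ((-1) ^+ t * r2) x.
Proof.
case: x => [[[a b] c] d] /=.
by rewrite !(rmorphM, rmorphXn, rmorphN1) /=; ring.
Qed.

Lemma sqr_sqrtn (R : rcfType) (n : nat) : Num.sqrt (n%:R : R) ^+ 2 = n%:R.
Proof. by rewrite sqr_sqrtr ?ler0n. Qed.

Lemma emb_bq_eval D1 D2 s t x :
  emb D1 D2 s t x = bq_eval ((-1) ^+ s * Num.sqrt D1%:R) ((-1) ^+ t * Num.sqrt D2%:R) x.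
Proof. by case: x => [[[a b] c] d]; case: s t => [] []; rewrite /= ?expr0 ?expr1; ring. Qed.

Lemma val0E D1 D2 x : val0 D1 D2 x = bq_eval (Num.sqrt D1%:R) (Num.sqrt D2%:R) x.
Proof. by rewrite /val0 emb_bq_eval !mul1r. Qed.

Lemma emb_conj D1 D2 s t s' t' x :
  emb D1 D2 s t (bq_conj s' t' x) = emb D1 D2 (s (+) s') (t (+) t') x.
Proof. by rewrite !emb_bq_eval bq_eval_conj !mulrA -!signr_addb !(addbC s') !(addbC t'). Qed.

Lemma normK_ratr D1 D2 x : normK D1 D2 x = ratr (bq_norm D1 D2 x).
Proof.
rewrite /normK !big_ord_recl big_ord0 mulr1 /embi /= !emb_bq_eval /= ?expr0 ?expr1.
by rewrite !mulN1r !mul1r !mulrA (bq_norm_conjugates (sqr_sqrtn _ D1) (sqr_sqrtn _ D2)).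
Qed.

Lemma bq_normM D1 D2 x y :
  bq_norm D1 D2 (bq_mul D1 D2 x y) = bq_norm D1 D2 x * bq_norm D1 D2 y.
Proof.
pose r1 := Num.sqrt (D1%:R : realalg); pose r2 := Num.sqrt (D2%:R : realalg).
have [r1_sqr r2_sqr] : r1 ^+ 2 = D1%:R /\ r2 ^+ 2 = D2%:R by split; apply: sqr_sqrtn.
have [Nr1_sqr Nr2_sqr] : (- r1) ^+ 2 = D1%:R /\ (- r2) ^+ 2 = D2%:R by rewrite !sqrrN.
apply: (fmorph_inj (@ratr realalg)); rewrite rmorphM /= -!(bq_norm_conjugates r1_sqr r2_sqr).
rewrite (bq_evalM r1_sqr r2_sqr) (bq_evalM Nr1_sqr r2_sqr).
rewrite (bq_evalM r1_sqr Nr2_sqr) (bq_evalM Nr1_sqr Nr2_sqr); ring.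
Qed.

Lemma rat_Aint (q : rat) : (ratr q : algC) \in Aint -> exists k : int, q = k%:~R.
Proof.
move=> /(Cint_rat_Aint (Crat_rat q)) /intrP[k qk]; exists k.
by apply: (fmorph_inj (@ratr algC)); rewrite rmorph_int.
Qed.

Lemma unitK_N1 D1 D2 : unitK D1 D2 (bq_cst (-1)).
Proof.
have val0_N1 : val0 D1 D2 (bq_cst (-1)) = -1 by rewrite val0E bq_evalC rmorphN1.
have integralK_N1 : integralK D1 D2 (bq_cst (-1)).
  exists ('X + 1); split; first exact: monicXaddC.
  rewrite val0_N1 (_ : (fun z : int => z%:~R : realalg) = intmul 1) //.
  by rewrite rmorphD /= map_polyX rmorph1 /root !hornerE addNr.
split=> //; exists (bq_cst (-1)); split=> //.
by rewrite val0_N1 mulrNN mulr1.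
Qed.

Lemma sgnK_N1 D1 D2 : sgnK D1 D2 (bq_cst (-1)) = \row_(i < 4) 1.
Proof. by apply/rowP => i; rewrite !mxE /embi emb_bq_eval bq_evalC rmorphN1 ltrN10. Qed.

Section BiquadraticUnits.
Context {D1 D2 : nat}.
Hypotheses (D1_nsqr : forall q : rat, q ^+ 2 != D1%:R)
  (D2_nsqr : forall q : rat, q ^+ 2 != D2%:R)
  (D12_nsqr : forall q : rat, q ^+ 2 != D1%:R * D2%:R).

Local Notation s1 := (Num.sqrt (D1%:R : realalg)).
Local Notation s2 := (Num.sqrt (D2%:R : realalg)).

Lemma bq_eval_sqrt_eq0 x : bq_eval s1 s2 x = 0 -> x = bq_cst 0.
Proof.
have [s1_sqr s2_sqr] : s1 ^+ 2 = ratr D1%:R /\ s2 ^+ 2 = ratr D2%:R.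
  by rewrite !ratr_nat !sqr_sqrtn.
case: x => [[[a b] c] d] /= /(ratr_biquad_eq0 s1_sqr s2_sqr D1_nsqr D2_nsqr D12_nsqr).
by case=> -> -> -> ->.
Qed.

Lemma bq_eval_sqrt_inj : injective (bq_eval s1 s2).
Proof.
case=> [[[a b] c] d] [[[a' b'] c'] d'] /eqP; rewrite -subr_eq0 => /eqP xy0.
have /bq_eval_sqrt_eq0[] : bq_eval s1 s2 (a - a', b - b', c - c', d - d') = 0.
  by rewrite -xy0 /= !rmorphB /=; ring.
by move=> /subr0_eq-> /subr0_eq-> /subr0_eq-> /subr0_eq->.
Qed.

Lemma bq_mul_eq1 x y : val0 D1 D2 x * val0 D1 D2 y = 1 -> bq_mul D1 D2 x y = bq_cst 1.
Proof.
rewrite !val0E -(bq_evalM (sqr_sqrtn _ D1) (sqr_sqrtn _ D2)) => xy1.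
by apply: bq_eval_sqrt_inj; rewrite xy1 bq_evalC rmorph1.
Qed.

Lemma root_bq_eval {p : {poly int}} {x : bq} :
  root (map_poly (fun z : int => z%:~R : realalg) p) (val0 D1 D2 x) ->
  forall (R : numFieldType) (r1 r2 : R), r1 ^+ 2 = D1%:R -> r2 ^+ 2 = D2%:R ->
  root (map_poly (fun z : int => z%:~R : R) p) (bq_eval r1 r2 x).
Proof.
have [y p_xy] := horner_bq_eval D1 D2 p x.
rewrite /root val0E p_xy ?sqr_sqrtn // => /eqP/bq_eval_sqrt_eq0 y0 R r1 r2 r1_sqr r2_sqr.
by rewrite p_xy // y0 bq_evalC rmorph0.
Qed.

Lemma integralK_norm x : integralK D1 D2 x -> exists k : int, bq_norm D1 D2 x = k%:~R.
Proof.
case=> p [p_monic p_x]; pose r1 := sqrtC (D1%:R : algC); pose r2 := sqrtC (D2%:R : algC).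
have [r1_sqr r2_sqr] : r1 ^+ 2 = D1%:R /\ r2 ^+ 2 = D2%:R by split; apply: sqrtCK.
have Aint_x (t1 t2 : algC) : t1 ^+ 2 = D1%:R -> t2 ^+ 2 = D2%:R -> bq_eval t1 t2 x \in Aint.
  move=> t1_sqr t2_sqr; apply: root_monic_Aint.
  - exact: root_bq_eval p_x _ _ _ t1_sqr t2_sqr.
  - exact: monic_map.
  - by apply/polyOverP => i; rewrite coef_map /= intr_int.
apply: rat_Aint; rewrite -(bq_norm_conjugates r1_sqr r2_sqr).
by rewrite !rpredM ?Aint_x ?sqrrN.
Qed.

Lemma unitK_norm x : unitK D1 D2 x -> bq_norm D1 D2 x = 1 \/ bq_norm D1 D2 x = -1.
Proof.
case=> /integralK_norm[k Nx] [y [/integralK_norm[l Ny] /bq_mul_eq1 xy1]].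
have kl : k * l = 1.
  apply: (@intr_inj rat); rewrite intrM -Nx -Ny -bq_normM xy1 /=; ring.
have : k \is a GRing.unit by apply/unitrPr; exists l.
by case/orP => /eqP k_pm1; [left | right]; rewrite Nx k_pm1.
Qed.

Lemma unitK_conj s t x : unitK D1 D2 x -> unitK D1 D2 (bq_conj s t x).
Proof.
pose t1 := (-1) ^+ s * Num.sqrt (D1%:R : realalg).
pose t2 := (-1) ^+ t * Num.sqrt (D2%:R : realalg).
have [t1_sqr t2_sqr] : t1 ^+ 2 = D1%:R /\ t2 ^+ 2 = D2%:R.
  by rewrite !exprMn !sqrr_sign !mul1r !sqr_sqrtn.
have val0_conj z : val0 D1 D2 (bq_conj s t z) = bq_eval t1 t2 z.
  by rewrite val0E bq_eval_conj.
have integralK_conj z : integralK D1 D2 z -> integralK D1 D2 (bq_conj s t z).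
  case=> p [p_monic p_z]; exists p; split => //; rewrite val0_conj.
  exact: root_bq_eval p_z _ _ _ t1_sqr t2_sqr.
case=> x_int [y [y_int xy1]]; split; first exact: integralK_conj.
exists (bq_conj s t y); split; first exact: integralK_conj.
rewrite !val0_conj -(bq_evalM t1_sqr t2_sqr).
by rewrite bq_mul_eq1 // bq_evalC rmorph1.
Qed.

Lemma sgnK_conj s t x : sgnK D1 D2 (bq_conj s t x) =
  \row_(i < 4) F2_of_bool (emb D1 D2 (odd i (+) s) ((2 <= i)%N (+) t) x < 0).
Proof. by apply/rowP => i; rewrite !mxE /embi emb_conj. Qed.

Lemma normK_lt0 {x : bq} : normK D1 D2 x < 0 ->
  (emb D1 D2 false false x < 0) (+) (emb D1 D2 true false x < 0)
  (+) (emb D1 D2 false true x < 0) (+) (emb D1 D2 true true x < 0).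
Proof.
move=> Nx_lt0; move: (Nx_lt0); rewrite /normK prodr_lt0_odd ?lt_eqF //.
by rewrite !big_ord_recl big_ord0 addn0 !oddD !oddb /= !addbA.
Qed.

Lemma mem_unit_sgn_set x : unitK D1 D2 x -> sgnK D1 D2 x \in unit_sgn_set D1 D2.
Proof. by move=> x_unit; rewrite inE; apply/asboolP; exists x. Qed.

End BiquadraticUnits.

Theorem lemma3p2 (D1 D2 : nat) :
  (1 < D1)%N -> (1 < D2)%N -> squarefree D1 -> squarefree D2 -> D1 <> D2 ->
  (sgnrk D1 D2 <= 3)%N ->
  forall eta : bq, unitK D1 D2 eta -> normK D1 D2 eta = 1.
Proof.
move=> D1_gt1 D2_gt1 sqD1 sqD2 D12 rk_le3 eta eta_unit.
have D1_nsqr := squarefree_nsqr D1_gt1 sqD1.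
have D2_nsqr := squarefree_nsqr D2_gt1 sqD2.
have D12_nsqr (q : rat) : q ^+ 2 != D1%:R * D2%:R.
  have [p p_pr odd_p] := squarefree_mul_odd_logn D1_gt1 D2_gt1 sqD1 sqD2 D12.
  by rewrite -natrM (rat_sqr_neq_odd_logn p_pr odd_p).
rewrite normK_ratr; case/(unitK_norm D1_nsqr D2_nsqr D12_nsqr): (eta_unit) => [-> | N_eta].
  exact: rmorph1.
have N_lt0 : normK D1 D2 eta < 0 by rewrite normK_ratr N_eta rmorphN1 ltrN10.
suff rk4 : sgnrk D1 D2 = 4%N by rewrite rk4 in rk_le3.
apply: (@dim_span_sign_patterns _ (fun s t => emb D1 D2 s t eta < 0) (normK_lt0 N_lt0))
  => [s t|].
  by rewrite -sgnK_conj; apply/mem_unit_sgn_set/(unitK_conj D1_nsqr D2_nsqr D12_nsqr).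
by rewrite -(sgnK_N1 D1 D2); apply/mem_unit_sgn_set/unitK_N1.
Qed.
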